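(* Let $\mathcal A=\{\ell_1,\dots,\ell_n\}$ be an arrangement of affine lines in $\mathbb C^2$ whose graph of double points $\Gamma$ is connected. Then the projectivization $\overline{\mathcal A}$ of the cone $c\mathcal A$ does not support any multinet structure, i.e. for no multiplicity function $m:\overline{\mathcal A}\to\mathbb Z_{>0}$ is there a multinet on $(\overline{\mathcal A},m)$.
   Context: The graph of double points $\Gamma$ of $\mathcal A$ has vertex set $\mathcal A$, with an edge $\{\ell_i,\ell_j\}$ iff $\ell_i\cap\ell_j$ is a point lying on no other line of $\mathcal A$. The cone $c\mathcal A$ is the central arrangement of $n+1$ planes in $\mathbb C^3$ consisting of the coordinate plane $z_0=0$ and the zero sets of the homogenizations (with respect to $z_0$) of the defining linear polynomials of the $\ell_i$. Its projectivization $\overline{\mathcal A}$ is the arrangement of $n+1$ lines in $\mathbb P^2$ (the projective closures of the $\ell_i$ and the line at infinity). A multinet on a multiarrangement $(\overline{\mathcal A},m)$ (Falk–Yuzvinsky) consists of a partition of $\overline{\mathcal A}$ into $k\ge 3$ nonempty classes $\overline{\mathcal A}_1,\dots,\overline{\mathcal A}_k$ and a set $\mathcal X$ of points of $\mathbb P^2$ such that: (i) $\sum_{\ell\in\overline{\mathcal A}_i}m(\ell)$ is independent of $i$; (ii) if $\ell\in\overline{\mathcal A}_i$, $\ell'\in\overline{\mathcal A}_j$ with $i\ne j$, then $\ell\cap\ell'\in\mathcal X$; (iii) for each $p\in\mathcal X$, $\sum_{\ell\in\overline{\mathcal A}_i,\,p\in\ell}m(\ell)$ is independent of $i$; (iv)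 for each $i$ and any $\ell,\ell'\in\overline{\mathcal A}_i$ there is a sequence $\ell=\ell_0,\ell_1,\dots,\ell_r=\ell'$ in $\overline{\mathcal A}_i$ with $\ell_{s-1}\cap\ell_s\notin\mathcal X$ for all $s$. *)

From HB Require Import structures.
From mathcomp Require Import all_boot all_order all_algebra.
From Stdlib Require Import Relations.
Set Implicit Arguments. Unset Strict Implicit. Unset Printing Implicit Defensive.
Import Order.TTheory GRing.Theory Num.Theory.
Local Open Scope ring_scope.

Definition v1 {R : Type} (u : R * R * R) := u.1.1.
Definition v2 {R : Type} (u : R * R * R) := u.1.2.
Definition v3 {R : Type} (u : R * R * R) := u.2.

Definition nonzero3 {R : numClosedFieldType} (u : R * R * R) : Prop :=
  u <> (0, 0, 0).
Definition proportional3 {R : numClosedFieldType} (u w : R * R * R) : Prop :=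
  exists c : R, c != 0 /\ w = (c * v1 u, c * v2 u, c * v3 u).

Definition on_affine {R : numClosedFieldType} (l : R * R * R) (x y : R) : bool :=
  v1 l * x + v2 l * y + v3 l == 0.

Definition affine_arrangement {R : numClosedFieldType} (n : nat)
  (A : 'I_n -> R * R * R) : Prop :=
  (forall i, (v1 (A i), v2 (A i)) <> (0, 0)) /\
  (forall i j, i != j -> ~ proportional3 (A i) (A j)).

Definition double_point_edge {R : numClosedFieldType} (n : nat)
  (A : 'I_n -> R * R * R) (i j : 'I_n) : Prop :=
  i <> j /\
  exists x y : R, on_affine (A i) x y /\ on_affine (A j) x y /\
    forall k, k <> i -> k <> j -> ~~ on_affine (A k) x y.

Definition double_point_graph_connected {R : numClosedFieldType} (n : nat)
  (A : 'I_n -> R * R * R) : Prop :=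
  forall i j : 'I_n, clos_refl_trans _ (double_point_edge A) i j.

(* Projectivized cone: lines in P^2 with homogeneous coordinates (z0, z1, z2).
   The homogenization of a x + b y + c is c z0 + a z1 + b z2, i.e. the covector
   (c, a, b); the line at infinity z0 = 0 is the covector (1, 0, 0) and is
   given index ord_max. *)
Definition proj_cone {R : numClosedFieldType} (n : nat)
  (A : 'I_n -> R * R * R) (i : 'I_n.+1) : R * R * R :=
  match unlift ord_max i with
  | Some j => (v3 (A j), v1 (A j), v2 (A j))
  | None => (1, 0, 0)
  end.

Definition on_proj {R : numClosedFieldType} (L p : R * R * R) : bool :=
  v1 L * v1 p + v2 L * v2 p + v3 L * v3 p == 0.

(* The intersection point of L and L' belongs to X (X is a set of points of
   P^2, given by a predicate on representatives). *)
Definition meet_in {R : numClosedFieldType} (X : R * R * R -> Prop)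
  (L L' : R * R * R) : Prop :=
  exists p, X p /\ nonzero3 p /\ on_proj L p /\ on_proj L' p.

Definition is_multinet {R : numClosedFieldType} (N : nat)
  (L : 'I_N -> R * R * R) (m : 'I_N -> nat)
  (k : nat) (cls : 'I_N -> 'I_k) (X : R * R * R -> Prop) : Prop :=
  (3 <= k)%N /\
  (forall c : 'I_k, exists l, cls l = c) /\
  [/\
      (forall c c' : 'I_k,
         (\sum_(l | cls l == c) m l = \sum_(l | cls l == c') m l)%N),
      (forall l l', cls l <> cls l' -> meet_in X (L l) (L l')),
      (forall p, X p -> nonzero3 p -> forall c c' : 'I_k,
         (\sum_(l | (cls l == c) && on_proj (L l) p) m l =
          \sum_(l | (cls l == c') && on_proj (L l) p) m l)%N) &
      (forall l l', cls l = cls l' ->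
         clos_refl_trans _
           (fun a b => cls a = cls l /\ cls b = cls l /\ ~ meet_in X (L a) (L b))
           l l')].

Definition supports_multinet {R : numClosedFieldType} (N : nat)
  (L : 'I_N -> R * R * R) : Prop :=
  exists (m : 'I_N -> nat), (forall l, (0 < m l)%N) /\
  exists k (cls : 'I_N -> 'I_k) (X : R * R * R -> Prop), is_multinet L m cls X.

From HB Require Import structures.
From mathcomp Require Import all_boot all_order all_algebra.
From Stdlib Require Import Relations.
From mathcomp Require Import ring zify.
Set Implicit Arguments. Unset Strict Implicit. Unset Printing Implicit Defensive.
Import Order.TTheory GRing.Theory Num.Theory.
Local Open Scope ring_scope.

(* In a multinet, condition (iii) and positivity of the multiplicities force
   every point of X to lie on lines of all k >= 3 classes.  A point lying on
   exactly two lines therefore cannot be in X, so by (ii) two lines meeting in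
   such a double point belong to the same class.  Two affine lines of A meeting
   in a double point of A still meet only there in the projective closure (the
   line at infinity misses affine points), so connectivity of the graph of
   double points puts all affine lines into one class; with the line at
   infinity this leaves at most two classes. *)

Lemma linear_forms_common_root_proportional (R : fieldType) (ai bi aj bj d1 d2 : R) :
  (ai, bi) <> (0, 0) -> (aj, bj) <> (0, 0) -> (d1, d2) <> (0, 0) ->
  ai * d1 + bi * d2 = 0 -> aj * d1 + bj * d2 = 0 ->
  exists2 t, t != 0 & aj = t * ai /\ bj = t * bi.
Proof.
move=> nzi nzj nzd ei ej.
have [d10 | d1n0] := eqVneq d1 0.
  have d2n0 : d2 != 0 by apply: contra_not_neq nzd => d20; rewrite d10 d20.
  move: ei ej; rewrite d10 !mulr0 !add0r => /eqP + /eqP.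
  rewrite !mulf_eq0 (negbTE d2n0) !orbF => /eqP bi0 /eqP bj0.
  have ai0 : ai != 0 by apply: contra_not_neq nzi => ai0; rewrite ai0 bi0.
  have aj0 : aj != 0 by apply: contra_not_neq nzj => aj0; rewrite aj0 bj0.
  exists (aj / ai); first by rewrite mulf_neq0 ?invr_eq0.
  by rewrite divfK // bi0 bj0 mulr0.
have coef0 (a b : R) : a * d1 + b * d2 = 0 -> (a, b) <> (0, 0) -> b != 0.
  move=> e nzab; apply: contra_not_neq nzab => b0.
  by move: e; rewrite b0 mul0r addr0 => /eqP; rewrite mulf_eq0 (negbTE d1n0) orbF => /eqP ->.
have bi0 := coef0 _ _ ei nzi; have bj0 := coef0 _ _ ej nzj.
exists (bj / bi); first by rewrite mulf_neq0 ?invr_eq0.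
split; last by rewrite divfK.
have eai : ai * d1 = - (bi * d2) by apply/eqP; rewrite -addr_eq0 ei.
have eaj : aj * d1 = - (bj * d2) by apply/eqP; rewrite -addr_eq0 ej.
by apply: (mulIf d1n0); rewrite eaj -[_ * ai * d1]mulrA eai mulrN mulrA divfK.
Qed.

Section AffineLines.

Variable R : numClosedFieldType.

Definition homogenize (u : R * R * R) : R * R * R := (v3 u, v1 u, v2 u).

Lemma on_proj_homogenize (u p : R * R * R) (x y : R) :
  v1 p != 0 -> v2 p = x * v1 p -> v3 p = y * v1 p ->
  on_proj (homogenize u) p = on_affine u x y.
Proof.
case: u => [[a b] c]; case: p => [[p0 p1] p2].
rewrite /on_affine /on_proj /homogenize /v1 /v2 /v3 /= => p0n0 -> ->.
have -> : c * p0 + a * (x * p0) + b * (y * p0) = (a * x + b * y + c) * p0 by ring.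
by rewrite mulf_eq0 (negbTE p0n0) orbF.
Qed.

Lemma homogenize_meet_affine (u w p : R * R * R) (x y : R) :
  (v1 u, v2 u) <> (0, 0) -> (v1 w, v2 w) <> (0, 0) -> ~ proportional3 u w ->
  on_affine u x y -> on_affine w x y -> nonzero3 p ->
  on_proj (homogenize u) p -> on_proj (homogenize w) p ->
  [/\ v1 p != 0, v2 p = x * v1 p & v3 p = y * v1 p].
Proof.
case: u => [[ai bi] ci]; case: w => [[aj bj] cj]; case: p => [[p0 p1] p2].
rewrite /on_affine /on_proj /homogenize /v1 /v2 /v3 /nonzero3 /proportional3 /=.
move=> nzi nzj nprop /eqP ei /eqP ej nzp /eqP pi /eqP pj.
have eci : ci = -(ai * x + bi * y) by apply/eqP; rewrite -addr_eq0 addrC ei.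
have ecj : cj = -(aj * x + bj * y) by apply/eqP; rewrite -addr_eq0 addrC ej.
subst ci cj.
have no_common_root d1 d2 : (d1, d2) <> (0, 0) ->
    ai * d1 + bi * d2 = 0 -> aj * d1 + bj * d2 = 0 -> False.
  move=> nzd e1 e2.
  have [t t0 [eaj ebj]] := linear_forms_common_root_proportional nzi nzj nzd e1 e2.
  by apply: nprop; exists t; split => //; rewrite eaj ebj; congr (_, _, _); ring.
have [p00 | p0n0] := eqVneq p0 0.
  exfalso; apply: (no_common_root p1 p2).
  - by move=> [e1 e2]; apply: nzp; rewrite p00 e1 e2.
  - by rewrite -pi p00; ring.
  - by rewrite -pj p00; ring.
have E1 : ai * (p1 - x * p0) + bi * (p2 - y * p0) = 0 by rewrite -pi; ring.
have E2 : aj * (p1 - x * p0) + bj * (p2 - y * p0) = 0 by rewrite -pj; ring.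
have [d1 | d1] := eqVneq (p1 - x * p0) 0; last first.
  by exfalso; apply: (no_common_root _ _ _ E1 E2) => -[e _]; rewrite e eqxx in d1.
have [d2 | d2] := eqVneq (p2 - y * p0) 0; last first.
  by exfalso; apply: (no_common_root _ _ _ E1 E2) => -[_ e]; rewrite e eqxx in d2.
by split => //; apply/eqP; rewrite -subr_eq0; apply/eqP.
Qed.

End AffineLines.

Lemma proj_cone_lift (R : numClosedFieldType) n (A : 'I_n -> R * R * R) j :
  proj_cone A (lift ord_max j) = homogenize (A j).
Proof. by rewrite /proj_cone liftK. Qed.

Lemma proj_cone_max (R : numClosedFieldType) n (A : 'I_n -> R * R * R) :
  proj_cone A ord_max = (1, 0, 0).
Proof. by rewrite /proj_cone unlift_none. Qed.

Lemma exists_ord_notin_pair k (c1 c2 : 'I_k) : (3 <= k)%N ->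
  exists c, c \notin [set c1; c2].
Proof.
move=> k3; have : (0 < #|~: [set c1; c2]|)%N.
  by have := cardsC [set c1; c2]; rewrite cards2 card_ord; case: (_ != _) => /=; lia.
by case/card_gt0P => c; rewrite in_setC; exists c.
Qed.

Section Multinet.

Variables (R : numClosedFieldType) (N k : nat) (L : 'I_N -> R * R * R).
Variables (m : 'I_N -> nat) (cls : 'I_N -> 'I_k) (X : R * R * R -> Prop).
Hypothesis multinet : is_multinet L m cls X.
Hypothesis m_gt0 : forall l, (0 < m l)%N.

Definition meet_only_at_double_points (l l' : 'I_N) : Prop :=
  forall p, nonzero3 p -> on_proj (L l) p -> on_proj (L l') p ->
  forall l'', on_proj (L l'') p -> l'' = l \/ l'' = l'.

Lemma multinet_point_on_every_class p l (c : 'I_k) :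
  X p -> nonzero3 p -> on_proj (L l) p ->
  exists2 l', cls l' = c & on_proj (L l') p.
Proof.
case: multinet => _ [_ [_ _ balanced _]] Xp nzp lp.
have := balanced p Xp nzp (cls l) c.
rewrite (bigD1 l) /= ?eqxx ?lp // => sum_eq.
have : (0 < \sum_(l' | (cls l' == c) && on_proj (L l') p) m l')%N.
  by rewrite -sum_eq ltn_addr.
rewrite lt0n sum_nat_eq0 => /forallPn[l' /negP].
by case: (_ && _) / andP => [[/eqP cl' l'p] _|//]; exists l'.
Qed.

Lemma double_point_same_class l l' :
  meet_only_at_double_points l l' -> cls l = cls l'.
Proof.
move=> dbl; apply/eqP; apply: contraT => /eqP cls_neq.
have [_ [_ [_ meet _ _]]] := multinet.
have [p [Xp [nzp [lp l'p]]]] := meet _ _ cls_neq.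
have [c c_new] := exists_ord_notin_pair (cls l) (cls l') multinet.1.
have [l'' cl'' l''p] := multinet_point_on_every_class c Xp nzp lp.
by move: c_new; case: (dbl p nzp lp l'p l'' l''p) => <-; rewrite -cl'' in_set2 eqxx ?orbT.
Qed.

Lemma multinet_classes_not_collapsed l0 :
  ~ (forall l l', l != l0 -> l' != l0 -> cls l = cls l').
Proof.
case: multinet => k3 [onto _] collapse.
have [l1 h1] := onto (Ordinal (leq_trans (isT : (0 < 3)%N) k3)).
have [l2 h2] := onto (Ordinal (leq_trans (isT : (1 < 3)%N) k3)).
have [l3 h3] := onto (Ordinal (leq_trans (isT : (2 < 3)%N) k3)).
have d12 : cls l1 <> cls l2 by rewrite h1 h2.
have d13 : cls l1 <> cls l3 by rewrite h1 h3.
have d23 : cls l2 <> cls l3 by rewrite h2 h3.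
have off (l l' : 'I_N) : cls l <> cls l' -> l = l0 -> l' != l0.
  by move=> d e; apply: contra_not_neq d => e'; rewrite e e'.
have [e1 | n1] := eqVneq l1 l0.
  exact: d23 (collapse _ _ (off _ _ d12 e1) (off _ _ d13 e1)).
have [e2 | n2] := eqVneq l2 l0.
  exact: d13 (collapse _ _ n1 (off _ _ d23 e2)).
exact: d12 (collapse _ _ n1 n2).
Qed.

End Multinet.

Lemma double_point_edge_cone (R : numClosedFieldType) n (A : 'I_n -> R * R * R) i j :
  affine_arrangement A -> double_point_edge A i j ->
  meet_only_at_double_points (proj_cone A) (lift ord_max i) (lift ord_max j).
Proof.
move=> [nz nprop] [/eqP ij [x [y [oi [oj off]]]]] p nzp.
rewrite !proj_cone_lift => pi pj.
have [p0 e1 e2] := homogenize_meet_affine (nz i) (nz j) (nprop i j ij) oi oj nzp pi pj.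
move=> l; case: (unliftP ord_max l) => [k -> | ->].
  rewrite proj_cone_lift (on_proj_homogenize _ p0 e1 e2) => ok.
  have [-> | ki] := eqVneq k i; first by left.
  have [-> | kj] := eqVneq k j; first by right.
  by have := off k (elimN eqP ki) (elimN eqP kj); rewrite ok.
rewrite proj_cone_max /on_proj /= mul1r !mul0r !addr0 => p00.
by rewrite p00 in p0.
Qed.

Lemma clos_refl_trans_eq_fun (T U : Type) (r : relation T) (f : T -> U) :
  (forall a b, r a b -> f a = f b) ->
  forall a b, clos_refl_trans _ r a b -> f a = f b.
Proof. by move=> fr a b; elim=> [x y /fr | // | x y z _ -> _ ->]. Qed.

Theorem theorem3p1 (R : numClosedFieldType) (n : nat) (A : 'I_n -> R * R * R) :
  affine_arrangement A ->
  double_point_graph_connected A ->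
  ~ supports_multinet (proj_cone A).
Proof.
move=> arr conn [m [m_gt0 [k [cls [X multinet]]]]].
have affine_same_class i j : cls (lift ord_max i) = cls (lift ord_max j).
  apply: (clos_refl_trans_eq_fun (f := fun i => cls (lift ord_max i))) (conn i j).
  by move=> a b edge; apply: (double_point_same_class multinet m_gt0);
     apply: double_point_edge_cone.
apply: (multinet_classes_not_collapsed multinet (l0 := ord_max)) => l l'.
case: (unliftP ord_max l) => [a -> _ | ->]; last by rewrite eqxx.
by case: (unliftP ord_max l') => [b -> _ | ->]; rewrite ?eqxx.
Qed.
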